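(* Let $\mathbb{X},\mathbb{Y}$ be finite-dimensional Banach spaces with $\dim\mathbb{X}=n$, $\dim\mathbb{Y}=m$. Let $T\in\mathbb{L}(\mathbb{X},\mathbb{Y})$, $\|T\|=1$, be an operator of rank $1$ such that $T(M_T)=\{\lambda y:|\lambda|=1\}$ for some unit vector $y\in\mathbb{Y}$. If $\dim\operatorname{span}(M_T)=n$ and $y$ is $m$-smooth, then $T$ is an extreme contraction.
   Context: $M_T=\{x\in\mathbb{X}:\|x\|=1,\|Tx\|=\|T\|\}$. For a unit vector $z$ of a normed space $\mathbb{Z}$, $J(z)=\{f\in\mathbb{Z}^*:\|f\|=1,f(z)=1\}$, and $z$ is $k$-smooth if $\dim\operatorname{span}J(z)=k$. An operator $T$ is an extreme contraction if it is an extreme point of the closed unit ball of $\mathbb{L}(\mathbb{X},\mathbb{Y})$ (operator norm). *)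

From HB Require Import structures.
From mathcomp Require Import all_boot all_order all_algebra.
From mathcomp Require Import boolp classical_sets reals.
Set Implicit Arguments. Unset Strict Implicit. Unset Printing Implicit Defensive.
Import Order.TTheory GRing.Theory Num.Theory.
Local Open Scope ring_scope.
Local Open Scope classical_set_scope.

(* A finite-dimensional real normed space of dimension n is modelled as
   R^n = 'rV[R]_n equipped with an arbitrary norm N. *)
Definition is_norm (R : realType) (n : nat) (N : 'rV[R]_n -> R) : Prop :=
  [/\ forall x, N x = 0 -> x = 0,
      forall (a : R) x, N (a *: x) = `|a| * N x
    & forall x y, N (x + y) <= N x + N y].

(* Linear operators X -> Y are n x m matrices acting on row vectors: x |-> x *m T. *)
Definition opnorm (R : realType) (n m : nat) (NX : 'rV[R]_n -> R)
  (NY : 'rV[R]_m -> R) (T : 'M[R]_(n, m)) : R :=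
  sup [set r | exists x, NX x = 1 /\ r = NY (x *m T)].

Definition M_T (R : realType) (n m : nat) (NX : 'rV[R]_n -> R)
  (NY : 'rV[R]_m -> R) (T : 'M[R]_(n, m)) : set 'rV[R]_n :=
  [set x | NX x = 1 /\ NY (x *m T) = opnorm NX NY T].

(* Linear functionals on Y are column vectors f : y |-> (y *m f) 0 0;
   their (dual) norm. *)
Definition fun_app (R : realType) (m : nat) (f : 'cV[R]_m) (y : 'rV[R]_m) : R :=
  (y *m f) 0 0.

Definition dualnorm (R : realType) (m : nat) (NY : 'rV[R]_m -> R)
  (f : 'cV[R]_m) : R :=
  sup [set r | exists y, NY y = 1 /\ r = `|fun_app f y|].

Definition Jset (R : realType) (m : nat) (NY : 'rV[R]_m -> R) (z : 'rV[R]_m)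
  : set 'cV[R]_m :=
  [set f | dualnorm NY f = 1 /\ fun_app f z = 1].

Definition dim_span_rV (R : realType) (d k : nat) (S : set 'rV[R]_d) : Prop :=
  exists B : 'M[R]_(k, d),
    [/\ forall i, S (row i B), row_free B & forall v, S v -> (v <= B)%MS].

Definition dim_span_cV (R : realType) (d k : nat) (S : set 'cV[R]_d) : Prop :=
  dim_span_rV k [set v : 'rV[R]_d | S v^T].

Definition k_smooth (R : realType) (m k : nat) (NY : 'rV[R]_m -> R)
  (z : 'rV[R]_m) : Prop :=
  NY z = 1 /\ dim_span_cV k (Jset NY z).

Definition extreme_contraction (R : realType) (n m : nat) (NX : 'rV[R]_n -> R)
  (NY : 'rV[R]_m -> R) (T : 'M[R]_(n, m)) : Prop :=
  opnorm NX NY T <= 1 /\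
  forall (A B : 'M[R]_(n, m)) (t : R),
    opnorm NX NY A <= 1 -> opnorm NX NY B <= 1 -> 0 < t < 1 ->
    T = t *: A + (1 - t) *: B -> A = T /\ B = T.

(* Decompose T = t A + (1 - t) B with A, B in the unit ball.  For x in M_T and
   f in J(y), the number f(x T) is +-1, an extreme point of [-1, 1], while
   f(x A) and f(x B) lie in [-1, 1]; hence f(x A) = f(x T).  If M_T contains a
   basis (x_i) of X and J(y) a basis (f_k) of Y^*, the matrices (f_k(x_i A))
   and (f_k(x_i T)) determine A and T, so A = T, and likewise B = T. *)
From HB Require Import structures.
From mathcomp Require Import all_boot all_order all_algebra lra.
From mathcomp Require Import boolp classical_sets reals.
From mathcomp Require Import topology normedtype matrix_normedtype derive.
Import Order.TTheory GRing.Theory Num.Theory numFieldNormedType.Exports.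
Local Open Scope ring_scope.
Local Open Scope classical_set_scope.

Lemma mxnorm_row_coord (R : realType) n (x : 'rV[R]_n) i : `|x 0 i| <= `|x|.
Proof.
rewrite [leRHS]/Num.norm /= mx_normrE; apply/bigmax_geP; right => /=.
by exists (ord0, i) => //=; rewrite [ord0]ord1.
Qed.

Section NormTheory.
Context {R : realType} {n : nat} {N : 'rV[R]_n -> R} (hN : is_norm N).

Lemma norm0 : N 0 = 0.
Proof. by case: hN => _ hZ _; rewrite -(scale0r (0 : 'rV_n)) hZ normr0 mul0r. Qed.

Lemma normN x : N (- x) = N x.
Proof. by case: hN => _ hZ _; rewrite -scaleN1r hZ normrN normr1 mul1r. Qed.

Lemma norm_ge0 x : 0 <= N x.
Proof.
case: hN => _ _ hD; have := hD x (- x).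
by rewrite subrr norm0 normN -mulr2n -mulr_natr pmulr_lge0.
Qed.

Lemma norm_gt0 {x} : x != 0 -> 0 < N x.
Proof.
case: hN => hN0 _ _ x0; rewrite lt_neqAle norm_ge0 andbT eq_sym.
by apply: contra x0 => /eqP/hN0 ->.
Qed.

Lemma norm_sum (I : Type) (r : seq I) (P : pred I) (F : I -> 'rV[R]_n) :
  N (\sum_(i <- r | P i) F i) <= \sum_(i <- r | P i) N (F i).
Proof.
case: hN => _ _ hD; apply: (big_ind2 (fun a b => N a <= b)) => //.
  by rewrite norm0.
by move=> a b a' b' h1 h2; apply: le_trans (hD _ _) (lerD h1 h2).
Qed.

Lemma norm_dist x y : `|N x - N y| <= N (x - y).
Proof.
case: hN => _ _ hD; rewrite ler_norml; apply/andP; split.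
  by rewrite lerNl opprB lerBlDr; have := hD (y - x) x; rewrite subrK -opprB normN.
by rewrite lerBlDr; have := hD (x - y) y; rewrite subrK.
Qed.

Lemma norm_mulmx_le {k} (x : 'rV[R]_k) (A : 'M[R]_(k, n)) :
  N (x *m A) <= `|x| * \sum_i N (row i A).
Proof.
rewrite mulmx_sum_row mulr_sumr; apply: le_trans (norm_sum _ _ _ _) _.
apply: ler_sum => i _; case: hN => _ hZ _; rewrite hZ.
by rewrite ler_wpM2r ?mxnorm_row_coord ?norm_ge0.
Qed.

Lemma is_norm_continuous : continuous N.
Proof.
set K := \sum_i N (row i (1%:M : 'M[R]_n)).
have K1 : 0 < K + 1 by rewrite ltr_wpDl ?sumr_ge0 // => i _; apply: norm_ge0.
move=> x; apply/(@cvgrPdist_lt _ _ _ _ (nbhs_filter x)) => e e0.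
apply/(@nbhs_normP R _ x); exists (e / (K + 1)); first by rewrite /= divr_gt0.
move=> z /= hxz; apply: le_lt_trans (norm_dist x z) _.
have := norm_mulmx_le (x - z) 1%:M; rewrite mulmx1 => /le_lt_trans; apply.
apply: le_lt_trans (_ : _ <= `|x - z| * (K + 1)) _; last by rewrite -ltr_pdivlMr.
by rewrite ler_wpM2l // lerDl.
Qed.

End NormTheory.

(* Equivalence with the max norm, from compactness of its unit sphere. *)
Lemma norm_ge_mxnorm {R : realType} {n} {N : 'rV[R]_n -> R} :
  is_norm N -> exists2 c, 0 < c & forall x, c * `|x| <= N x.
Proof.
case: n N => [|k] N hN.
  by exists 1 => // x; rewrite (thinmx0 x) normr0 mulr0 (norm_ge0 hN).
pose S := [set x : 'rV[R]_k.+1 | `|x| = 1].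
have normalize x : x != 0 -> `|x|^-1 *: x \in S.
  by move=> x0; rewrite inE /S /= normrZ normfV normr_id mulVf ?normr_eq0.
have cS : closed S.
  rewrite (_ : S = Num.norm @^-1` [set (1 : R)]) //.
  by apply: preimage_closed; [move=> ? _; apply: norm_continuous | apply: closed_eq].
have bS : bounded_set S.
  by rewrite /= /bounded_near; near=> M => x /= ->; near: M; apply: nbhs_pinfty_ge.
pose v := const_mx 1 : 'rV[R]_k.+1.
have v0 : v != 0 by apply/eqP => /matrixP/(_ 0 0)/eqP; rewrite !mxE oner_eq0.
have [c Sc cmin] := compact_EVT_min (ex_intro _ _ (set_mem (normalize v v0)))
  (bounded_closed_compact bS cS) (continuous_subspaceT (is_norm_continuous hN)).
have c0 : c != 0.
  by apply: contraPneq (set_mem Sc) => -> /=; rewrite normr0 => /esym/eqP; rewrite oner_eq0.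
exists (N c) => [|x]; first exact: norm_gt0.
have [->|x0] := eqVneq x 0; first by rewrite normr0 mulr0 (norm_ge0 hN).
have := cmin _ (normalize x x0); case: hN => _ -> _; rewrite normfV normr_id.
by rewrite -ler_pdivlMr ?normr_gt0 // mulrC.
Unshelve. all: by end_near.
Qed.

Lemma norm_eq1_mxnorm_bounded {R : realType} {n} {N : 'rV[R]_n -> R} :
  is_norm N -> exists c, forall x, N x = 1 -> `|x| <= c.
Proof.
move=> hN; have [c c0 hc] := norm_ge_mxnorm hN; exists c^-1 => x hx.
by rewrite -[c^-1]mulr1 ler_pdivlMl // -hx hc.
Qed.

Lemma fun_appD (R : realType) m (f : 'cV[R]_m) u v :
  fun_app f (u + v) = fun_app f u + fun_app f v.
Proof. by rewrite /fun_app mulmxDl mxE. Qed.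

Lemma fun_appZ (R : realType) m (f : 'cV[R]_m) (a : R) u :
  fun_app f (a *: u) = a * fun_app f u.
Proof. by rewrite /fun_app -scalemxAl mxE. Qed.

Lemma fun_app_le {R : realType} {m} (f : 'cV[R]_m) z :
  `|fun_app f z| <= `|z| * \sum_j `|f j 0|.
Proof.
rewrite /fun_app mxE mulr_sumr; apply: le_trans (ler_norm_sum _ _ _) _.
by apply: ler_sum => j _; rewrite normrM ler_wpM2r ?mxnorm_row_coord.
Qed.

Lemma mulmx_entry_fun_app (R : realType) a b c (M : 'M[R]_(a, b))
    (P : 'M[R]_(b, c)) i k :
  (M *m P) i k = fun_app (col k P) (row i M).
Proof. by rewrite /fun_app !mxE; apply: eq_bigr => j _; rewrite !mxE. Qed.

Section OperatorNorms.
Context {R : realType} {n m : nat} {NX : 'rV[R]_n -> R} {NY : 'rV[R]_m -> R}.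
Context (hNX : is_norm NX) (hNY : is_norm NY).

Lemma opnorm_ge (A : 'M[R]_(n, m)) x :
  NX x = 1 -> NY (x *m A) <= opnorm NX NY A.
Proof.
move=> hx; apply: sup_upper_bound; last by exists x.
split; first by exists (NY (x *m A)), x.
have [c hc] := norm_eq1_mxnorm_bounded hNX.
exists (c * \sum_i NY (row i A)) => _ [z [hz ->]].
apply: le_trans (norm_mulmx_le hNY z A) _.
by rewrite ler_wpM2r ?hc ?sumr_ge0 // => i _; apply: norm_ge0.
Qed.

Lemma dualnorm1_le {f : 'cV[R]_m} :
  dualnorm NY f = 1 -> forall z, `|fun_app f z| <= NY z.
Proof.
move=> hf z; have [->|z0] := eqVneq z 0.
  by rewrite /fun_app mul0mx mxE normr0 norm0.
have nz := norm_gt0 hNY z0; set u := (NY z)^-1 *: z.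
have u1 : NY u = 1 by case: hNY => _ -> _; rewrite normfV gtr0_norm ?mulVf ?gt_eqF.
suff : `|fun_app f u| <= 1.
  by rewrite fun_appZ normrM normfV (gtr0_norm nz) ler_pdivrMl // mulr1.
rewrite -hf; apply: sup_upper_bound; last by exists u.
split; first by exists `|fun_app f u|, u.
have [c hc] := norm_eq1_mxnorm_bounded hNY.
exists (c * \sum_j `|f j 0|) => _ [w [hw ->]].
by apply: le_trans (fun_app_le f w) _; rewrite ler_wpM2r ?hc ?sumr_ge0.
Qed.

End OperatorNorms.

Lemma convex_comb_unit_eq {R : realFieldType} {t a b lam : R} :
  0 < t < 1 -> `|a| <= 1 -> `|b| <= 1 -> `|lam| = 1 ->
  lam = t * a + (1 - t) * b -> a = lam.
Proof.
move=> /andP[t0 t1]; rewrite !ler_norml => /andP[a1 a2] /andP[b1 b2].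
have [lam0|lam0] := lerP 0 lam; first by rewrite ger0_norm // => ->; nra.
by rewrite ltr0_norm // => /eqP; rewrite eqr_oppLR => /eqP ->; nra.
Qed.

Lemma mulmx_unit_sides_inj (R : comUnitRingType) n m
    (P : 'M[R]_n) (F : 'M[R]_m) (A T : 'M[R]_(n, m)) :
  P \in unitmx -> F \in unitmx -> P *m A *m F = P *m T *m F -> A = T.
Proof.
move=> PU FU /(congr1 (mulmx^~ (invmx F))); rewrite !mulmxK //.
by move/(congr1 (mulmx (invmx P))); rewrite !mulKmx.
Qed.

Section ConvexDecomposition.
Context {R : realType} {n m : nat} {NX : 'rV[R]_n -> R} {NY : 'rV[R]_m -> R}.
Context (hNX : is_norm NX) (hNY : is_norm NY).
Context {T A B : 'M[R]_(n, m)} {y : 'rV[R]_m} {t : R}.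
Hypothesis hT_img :
  [set x *m T | x in M_T NX NY T] `<=` [set lam *: y | lam in [set lam : R | `|lam| = 1]].
Hypotheses (hA : opnorm NX NY A <= 1) (hB : opnorm NX NY B <= 1).
Hypotheses (ht : 0 < t < 1) (hT : T = t *: A + (1 - t) *: B).

Lemma fun_app_decomposition_eq f x :
  Jset NY y f -> M_T NX NY T x -> fun_app f (x *m A) = fun_app f (x *m T).
Proof.
move=> [hf1 hfy] Mx.
have [lam /= hlam hxy] : [set lam *: y | lam in [set lam : R | `|lam| = 1]] (x *m T).
  by apply: hT_img; exists x.
have unit_ball_le (C : 'M[R]_(n, m)) : opnorm NX NY C <= 1 ->
    `|fun_app f (x *m C)| <= 1.
  move=> hC; apply: le_trans (dualnorm1_le hNY hf1 _) _.
  by apply: le_trans hC; apply: opnorm_ge; case: Mx.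
have fT : fun_app f (x *m T) = lam by rewrite -hxy fun_appZ hfy mulr1.
rewrite fT; apply: (convex_comb_unit_eq ht (unit_ball_le _ hA) (unit_ball_le _ hB) hlam).
by rewrite -fT hT mulmxDr -!scalemxAr fun_appD !fun_appZ.
Qed.

Lemma convex_decomposition_eq :
  dim_span_rV n (M_T NX NY T) -> dim_span_cV m (Jset NY y) -> A = T.
Proof.
move=> [Bx [BxM BxF _]] [Fm [FmJ FmF _]].
apply: (@mulmx_unit_sides_inj _ _ _ Bx Fm^T).
- by rewrite -row_free_unit.
- by rewrite unitmx_tr -row_free_unit.
apply/matrixP => i k; rewrite !mulmx_entry_fun_app !row_mul -tr_row.
by apply: fun_app_decomposition_eq; [apply: FmJ | apply: BxM].
Qed.

End ConvexDecomposition.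

Theorem mainTheorem5 (R : realType) (n m : nat)
  (NX : 'rV[R]_n -> R) (NY : 'rV[R]_m -> R)
  (hNX : is_norm NX) (hNY : is_norm NY)
  (T : 'M[R]_(n, m)) (y : 'rV[R]_m) :
  opnorm NX NY T = 1 ->
  \rank T = 1%N ->
  NY y = 1 ->
  [set x *m T | x in M_T NX NY T] = [set lam *: y | lam in [set lam : R | `|lam| = 1]] ->
  dim_span_rV n (M_T NX NY T) ->
  k_smooth m NY y ->
  extreme_contraction NX NY T.
Proof.
move=> hT1 _ _ /seteqP[hImg _] hMT [_ hJ].
split=> [|A B t hA hB ht hT]; first by rewrite hT1.
have ht' : 0 < 1 - t < 1.
  by case/andP: ht => t0 t1; rewrite subr_gt0 t1 /= ltrBlDr ltrDl.
have hT' : T = (1 - t) *: B + (1 - (1 - t)) *: A by rewrite subKr addrC.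
split; first exact: (convex_decomposition_eq hNX hNY hImg hA hB ht hT hMT hJ).
exact: (convex_decomposition_eq hNX hNY hImg hB hA ht' hT' hMT hJ).
Qed.
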